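(* Let $G$ be a group of order $128$. Then $\operatorname{rdim}(G) \le 10$.
   Context: $\operatorname{rdim}(G)$ is the minimal dimension of a faithful complex linear representation of $G$. *)

From mathcomp Require Import all_boot all_algebra all_fingroup all_solvable all_field all_character.
Set Implicit Arguments. Unset Strict Implicit. Unset Printing Implicit Defensive.

(* Complex numbers are modelled by MathComp's algC (algebraic complex
   numbers), the standard field for character/representation theory of
   finite groups. *)
Definition has_faithful_rep (gT : finGroupType) (G : {group gT}) (n : nat) : Prop :=
  exists rG : mx_representation algC G n, mx_faithful rG.

Definition rdim_le (gT : finGroupType) (G : {group gT}) (m : nat) : Prop :=
  exists2 n, (n <= m)%N & has_faithful_rep G n.

(* A sum of irreducible characters of the 2-group G is faithful as soon as the
   intersection of their kernels meets Omega_1(Z(G)) trivially, and every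
   irreducible character whose kernel misses part of the current intersection
   at least halves it, so log_2 |Omega_1(Z(G))| characters suffice.  Their
   degrees d satisfy d^2 |Z(G)| <= 128, which gives the bound 10 unless
   |Z(G)| = |Omega_1(Z(G))| = 8 and all characters nontrivial on Z(G) have
   degree 4.  Such characters vanish off Z(G), so every g outside Z(G) has
   |C_G(g)| = 16; then squaring maps G into Z(G), and the commutator pairing,
   its polar form, maps G onto Z(G) from every g outside Z(G).  For each
   nontrivial linear character lambda of Z(G) the Gauss sum
   T = sum_x lambda(x^2) then satisfies T^2 = 1024, i.e. T = +-32, while the
   sum of all eight Gauss sums is 8 #{x | x^2 = 1}, a multiple of 64: but
   128 + 7 terms +-32 is 32 mod 64. *)

From mathcomp Require Import all_boot all_order all_algebra all_fingroup all_solvable all_field all_character.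
From mathcomp Require Import zify ring.
Set Implicit Arguments. Unset Strict Implicit. Unset Printing Implicit Defensive.
Import Order.TTheory GRing.Theory Num.Theory.

Lemma leq_sum_seq_size (T : eqType) (s : seq T) (f : T -> nat) m B :
    size s <= m -> (forall x, x \in s -> m * f x <= B) ->
  \sum_(x <- s) f x <= B.
Proof.
case: m => [|m] size_s f_le; first by case: s size_s f_le => // _; rewrite big_nil.
rewrite -(leq_pmul2l (ltn0Sn m)) big_distrr /= big_seq.
apply: (@leq_trans (\sum_(x <- s | x \in s) B)); first exact: leq_sum.
by rewrite -big_seq big_const_seq count_predT iter_addn_0 mulnC leq_mul2r size_s orbT.
Qed.

Local Open Scope group_scope.
Local Open Scope ring_scope.

Section IrrDegree.

Variables (gT : finGroupType) (G : {group gT}).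

Definition irr_deg (i : Iirr G) : nat := Num.truncn ('chi_i 1%g).

Lemma irr_degE i : 'chi_i 1%g = (irr_deg i)%:R.
Proof. by rewrite truncnK ?Cnat_irr1. Qed.

Lemma irr_deg_dvdG i : (irr_deg i %| #|G|)%N.
Proof. by have := dvd_irr1_cardG i; rewrite irr_degE dvdC_nat. Qed.

Lemma irr_deg_sqr_center i : (irr_deg i * irr_deg i * #|'Z(G)| <= #|G|)%N.
Proof.
have sZ : 'Z(G) \subset 'Z('chi_i)%CF by rewrite -cap_cfcenter_irr (bigcap_inf i).
rewrite -(Lagrange (center_sub G)) mulnC leq_mul2l mulnn -(ler_nat algC) natrX -irr_degE.
apply/orP; right; apply: le_trans (irr1_bound i).1 _.
by rewrite ler_nat dvdn_leq // indexgS.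
Qed.

Lemma irr_sqr_index_center i : 'chi_i 1%g ^+ 2 = #|G : 'Z(G)|%:R ->
  'Z('chi_i)%CF = 'Z(G) /\ 'chi_i \in 'CF(G, 'Z(G)).
Proof.
move=> chi1.
have sZ : 'Z(G) \subset 'Z('chi_i)%CF by rewrite -cap_cfcenter_irr (bigcap_inf i).
have le_idx : (#|G : 'Z('chi_i)%CF| <= #|G : 'Z(G)|)%N.
  by rewrite dvdn_leq // indexgS.
have eq_idx : #|G : 'Z('chi_i)%CF| = #|G : 'Z(G)|.
  apply/eqP; rewrite eqn_leq le_idx -(ler_nat algC) -chi1; exact: (irr1_bound i).1.
have eZ : 'Z('chi_i)%CF = 'Z(G).
  apply/eqP; rewrite eq_sym eqEcard sZ -(divg_indexS (cfcenter_sub 'chi_i)) /= eq_idx.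
  by rewrite divg_indexS ?center_sub.
by split=> //; rewrite -eZ -(irr1_bound i).2 chi1 -eZ.
Qed.

End IrrDegree.

Lemma card_subcent1_quo (gT : finGroupType) (G H : {group gT}) x :
    H <| G -> x \in G ->
    (forall i : Iirr G, ~~ (H \subset cfker 'chi_i) -> 'chi_i x = 0) ->
  #|'C_G[x]| = #|'C_(G / H)[coset H x]|.
Proof.
move=> nsHG Gx vanish; apply/eqP; rewrite -(eqr_nat algC); apply/eqP.
have := second_orthogonality_relation x Gx; rewrite class_refl mulr1n => <-.
have GHx : coset H x \in (G / H)%g by rewrite mem_quotient.
have := second_orthogonality_relation (coset H x) GHx.
rewrite class_refl mulr1n => <-.
under eq_bigr do rewrite -normCK.
under [RHS]eq_bigr do rewrite -normCK.
rewrite sum_norm_irr_quo // (bigID (fun i => H \subset cfker 'chi_i)) /=.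
by rewrite [X in _ + X]big1 ?addr0 // => i /vanish ->; rewrite normr0 expr0n.
Qed.

Lemma irr_seq_cfker_TI (gT : finGroupType) (G K : {group gT}) (p : nat) :
    p.-group K -> K \subset G ->
  exists2 s : seq (Iirr G),
    (size s <= logn p #|K|)%N & K :&: \bigcap_(i <- s) cfker 'chi_i = 1%g.
Proof.
have [n] := ubnP #|K|; elim: n K => // n IH K ltKn pK sKG.
have [->|ntK] := eqsVneq K 1%G; first by exists [::]; rewrite ?big_nil ?setIT.
have [i notKi] : exists i, ~~ (K \subset cfker 'chi[G]_i).
  apply/existsP; apply: contraR ntK => /existsPn kerK.
  rewrite -subG1 -(TI_cfker_irr G); apply/bigcapsP => i _; exact: negbNE (kerK i).
pose K' := (K :&: cfker 'chi[G]_i)%G.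
have ltK' : K' \proper K by rewrite properE subsetIl subsetI subxx.
have pK' : p.-group K' := pgroupS (subsetIl _ _) pK.
have [|s size_s K's] := IH K' _ pK' (subset_trans (subsetIl _ _) sKG).
  exact: leq_trans (proper_card ltK') (ltnSE ltKn).
exists (i :: s); last by rewrite big_cons setIA.
rewrite /= (leq_ltn_trans size_s) //.
have [p_pr _ _] := pgroup_pdiv pK ntK.
rewrite -(ltn_exp2l _ _ (prime_gt1 p_pr)) -(card_pgroup pK) -(card_pgroup pK').
exact: proper_card.
Qed.

Lemma cfker_sum_irr (gT : finGroupType) (G : {group gT}) (s : seq (Iirr G)) :
  cfker (\sum_(i <- s) 'chi_i) \subset \bigcap_(i <- s) cfker 'chi_i.
Proof.
rewrite bigcap_seq; apply/bigcapsP => i s_i.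
apply: cfker_constt; first by apply: rpred_sum => j _; apply: irr_char.
rewrite inE cfdot_suml (big_rem i) //= cfdot_irr eqxx lt0r_neq0 // ltr_wpDr ?ltr01 //.
by rewrite sumr_ge0 // => j _; rewrite cfdot_irr ler0n.
Qed.

Lemma nil_normal_TI_Ohm1_center (gT : finGroupType) (G H : {group gT}) :
  nilpotent G -> H <| G -> H :&: 'Ohm_1('Z(G)) = 1%g -> H :=: 1%g.
Proof.
move=> nilG nsHG /TI_Ohm1 tiHZ; apply/eqP; apply: contraT => ntH.
by have := meet_center_nil nilG nsHG ntH; rewrite tiHZ eqxx.
Qed.

Lemma faithful_rep_irr_seq (gT : finGroupType) (G : {group gT}) (s : seq (Iirr G)) :
    nilpotent G -> 'Ohm_1('Z(G)) :&: \bigcap_(i <- s) cfker 'chi_i = 1%g ->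
  has_faithful_rep G (\sum_(i <- s) irr_deg i).
Proof.
move=> nilG ker_s; pose theta := \sum_(i <- s) 'chi[G]_i.
have /char_reprP[[n rG] def_theta] : theta \is a character.
  by apply: rpred_sum => i _; apply: irr_char.
have -> : (\sum_(i <- s) irr_deg i)%N = n.
  apply/eqP; rewrite -(eqr_nat algC) -(cfRepr1 rG) -def_theta sum_cfunE natr_sum.
  by apply/eqP/eq_bigr => i _; rewrite irr_degE.
exists rG; rewrite /mx_faithful -cfker_repr -def_theta.
rewrite (nil_normal_TI_Ohm1_center nilG (cfker_normal theta)) //.
by apply/trivgP; rewrite -ker_s setIC; apply/setSI/cfker_sum_irr.
Qed.

Section GroupIdentities.

Local Close Scope ring_scope.
Variable gT : finGroupType.
Implicit Types x y w : gT.

Lemma commg_sqr x y :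
  commute (y ^+ 2)^-1 x -> [~ x, y] = (x ^+ 2)^-1 * (y ^+ 2)^-1 * (x * y) ^+ 2.
Proof.
rewrite !expgS !expg0 !mulg1 !invMg => cxy.
rewrite -!mulgA; congr (_ * _).
rewrite [y^-1 * (y^-1 * _)]mulgA [y^-1 * y^-1 * _]mulgA cxy -mulgA mulKg.
by rewrite /conjg -mulgA mulKg.
Qed.

Lemma expg2M_commg x w :
  commute [~ w, x] w -> (x * w) ^+ 2 = x ^+ 2 * w ^+ 2 * [~ w, x].
Proof.
move=> cw; rewrite !expgS !expg0 !mulg1 -!mulgA; congr (_ * _).
by rewrite (mulgA w x w) (commgC w x) -(mulgA (x * w) _ w) cw !mulgA.
Qed.

End GroupIdentities.

Section SmallCentralizers.

Local Close Scope ring_scope.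
Variables (gT : finGroupType) (G : {group gT}).
Local Notation Z := 'Z(G).
Implicit Types x y w z : gT.

Hypothesis card_cent1 : forall g, g \in G -> g \notin Z -> #|'C_G[g]| = (#|Z| * 2)%N.

Let center_commute z x : z \in Z -> x \in G -> commute z x.
Proof. by case/centerP=> _; apply. Qed.

Lemma expg2_center x : x \in G -> x ^+ 2 \in Z.
Proof.
move=> Gx; have [Zx|notZx] := boolP (x \in Z); first by rewrite groupX.
have sZC : Z \subset 'C_G[x].
  by rewrite subsetI center_sub; apply/subsetP=> z Zz; apply/cent1P/center_commute.
have nZC : 'C_G[x] \subset 'N(Z).
  exact: subset_trans (subsetIl _ _) (normal_norm (center_normal G)).
have Cx : x \in 'C_G[x] := subcent1_id Gx.
have oCZ : #|('C_G[x] / Z)%g| = 2.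
  rewrite card_quotient // -(divgS sZC) card_cent1 // mulKn //; exact: cardG_gt0.
apply: coset_idr; first by rewrite groupX // (subsetP nZC).
by rewrite morphX ?(subsetP nZC) //= -oCZ expg_cardG ?mem_quotient.
Qed.

Lemma commg_center x y : x \in G -> y \in G -> [~ x, y] \in Z.
Proof.
move=> Gx Gy; rewrite commg_sqr; last by apply: center_commute; rewrite ?groupV ?expg2_center.
by apply: groupM; [apply: groupM|]; rewrite ?groupV expg2_center ?groupM.
Qed.

Lemma commgMr_center w x y : w \in G -> x \in G -> y \in G ->
  [~ w, x * y] = [~ w, x] * [~ w, y].
Proof.
move=> Gw Gx Gy; rewrite commgMJ conjgE.
rewrite (center_commute (commg_center Gw Gx) Gy) mulKg.
exact: center_commute (commg_center Gw Gy) (subsetP (center_sub G) _ (commg_center Gw Gx)).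
Qed.

Lemma expg2M_center x w : x \in G -> w \in G -> (x * w) ^+ 2 = x ^+ 2 * w ^+ 2 * [~ w, x].
Proof. by move=> Gx Gw; apply/expg2M_commg/center_commute; rewrite ?commg_center. Qed.

Hypothesis card_G : #|G| = (#|Z| * #|Z| * 2)%N.

Lemma commg_onto w z : w \in G -> w \notin Z -> z \in Z ->
  exists2 x, x \in G & [~ w, x] = z.
Proof.
move=> Gw notZw Zz.
have commwM : {in G &, {morph (fun x => [~ w, x]) : x y / x * y}}.
  by move=> x y Gx Gy /=; apply: commgMr_center.
pose f := Morphism commwM.
have sfGZ : f @* G \subset Z.
  by apply/subsetP=> _ /morphimP[x _ Gx ->]; apply: commg_center.
have sKC : 'ker f \subset 'C_G[w].
  apply/subsetP=> x Kx; have Gx := dom_ker Kx.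
  rewrite inE Gx; apply/cent1P/commute_sym/commgP.
  by rewrite -[[~ w, x]]/(f x) (mker Kx).
have oZ : #|G : 'C_G[w]| = #|Z|.
  by rewrite -divgS ?subsetIl // card_cent1 // card_G -mulnA mulnK // muln_gt0 cardG_gt0.
have /eqP fGZ : f @* G == Z.
  rewrite eqEcard sfGZ card_morphim setIid -oZ dvdn_leq ?indexg_gt0 //.
  exact: indexgS.
by rewrite -fGZ in Zz; case/morphimP: Zz => x _ Gx ->; exists x.
Qed.

Hypothesis center_exp2 : forall z, z \in Z -> z ^+ 2 = 1.

Local Open Scope ring_scope.

Let lin_center (j : Iirr Z) : 'chi_j \is a linear_char.
Proof. exact/char_abelianP/center_abelian. Qed.

Let sum_mulg_reindex (F : gT -> algC) x : x \in G ->
  \sum_(y in G) F y = \sum_(y in G) F (x * y)%g.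
Proof.
move=> Gx; rewrite (reindex_inj (mulgI x)) /=.
by apply: eq_bigl => y; rewrite groupMl.
Qed.

Lemma sum_commg_lin_char (j : Iirr Z) w : j != 0 -> w \in G -> w \notin Z ->
  \sum_(x in G) 'chi_j [~ w, x]%g = 0.
Proof.
move=> nz_j Gw notZw.
have [z Zz chi_z] : exists2 z, z \in Z & 'chi_j z != 1.
  apply/exists_inP; apply: contraR nz_j => /exists_inPn chi1.
  apply/eqP/irr_inj; rewrite irr0; apply/cfun_inP => z Zz.
  by rewrite cfun1E Zz; apply/eqP/negbNE/chi1.
have [x0 Gx0 def_z] := commg_onto Gw notZw Zz.
set S := \sum_(x in G) _.
have : S = 'chi_j z * S.
  rewrite {1}/S (sum_mulg_reindex _ Gx0) mulr_sumr; apply: eq_bigr => x Gx.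
  by rewrite commgMr_center // -def_z lin_charM ?commg_center.
move/eqP; rewrite -subr_eq0 -{1}[S]mul1r -mulrBl mulf_eq0 subr_eq0 eq_sym.
by rewrite (negbTE chi_z) => /eqP.
Qed.

Definition gauss_sum (j : Iirr Z) : algC := \sum_(x in G) 'chi_j (x ^+ 2)%g.

Lemma gauss_sum_sqr (j : Iirr Z) : j != 0 -> gauss_sum j ^+ 2 = (#|G| * #|Z|)%:R.
Proof.
move=> nz_j; rewrite expr2 {1}/gauss_sum mulr_suml.
have twist x : x \in G -> 'chi_j (x ^+ 2)%g * gauss_sum j =
    \sum_(w in G) 'chi_j (w ^+ 2)%g * 'chi_j [~ w, x]%g.
  move=> Gx; rewrite /gauss_sum (sum_mulg_reindex _ Gx) mulr_sumr.
  apply: eq_bigr => w Gw; rewrite expg2M_center //.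
  have Zx2 := expg2_center Gx; have Zw2 := expg2_center Gw.
  have Zwx := commg_center Gw Gx.
  have x4 : (x ^+ 2 * x ^+ 2)%g = 1%g by rewrite -(center_exp2 Zx2) expgS expg1.
  rewrite (lin_charM (lin_center j) (groupM Zx2 Zw2) Zwx) (lin_charM (lin_center j) Zx2 Zw2).
  by rewrite !mulrA -(lin_charM (lin_center j) Zx2 Zx2) x4 lin_char1 ?mul1r.
rewrite (eq_bigr _ twist) exchange_big /=.
under eq_bigr do rewrite -mulr_sumr.
rewrite (bigID (fun w => w \in Z)) /= [X in _ + X]big1 ?addr0; last first.
  by move=> w /andP[Gw notZw]; rewrite sum_commg_lin_char ?mulr0.
rewrite (eq_bigl (fun w => w \in Z)); last first.
  by move=> w /=; rewrite andb_idl // => /(subsetP (center_sub G)).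
rewrite natrM mulrC mulr_natl -sumr_const; apply: eq_bigr => z Zz.
rewrite center_exp2 // lin_char1 // mul1r -sumr_const; apply: eq_bigr => x Gx.
suff -> : [~ z, x]%g = 1%g by rewrite lin_char1.
by apply/eqP/commgP; case/centerP: Zz => _; apply.
Qed.

Lemma gauss_sum0 : gauss_sum 0 = #|G|%:R.
Proof.
rewrite /gauss_sum irr0 -sumr_const; apply: eq_bigr => x Gx.
by rewrite cfun1E expg2_center.
Qed.

Let sqrt1 := [set x in G | (x ^+ 2 == 1)%g].

Lemma sum_gauss_sum : \sum_j gauss_sum j = (#|Z| * #|sqrt1|)%:R.
Proof.
have col_sum u : u \in Z -> \sum_j 'chi[Z]_j u = #|Z|%:R *+ (u == 1%g).
  move=> Zu; have := second_orthogonality_relation u (group1 Z).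
  under eq_bigr do rewrite lin_char1 // conjC1 mulr1.
  rewrite class1G inE => ->; case: eqP => [->|]; last by rewrite !mulr0n.
  by rewrite cent11T setIT.
rewrite /gauss_sum exchange_big /=.
rewrite (eq_bigr _ (fun x Gx => col_sum _ (expg2_center Gx))).
rewrite natrM [RHS]mulrC mulr_natl -(sumr_const (mem sqrt1)) big_mkcond [RHS]big_mkcond /=.
by apply: eq_bigr => x _; rewrite inE; case: (x \in G); case: eqP; rewrite ?mulr1n ?mulr0n.
Qed.

Lemma dvdn_center_card_sqrt1 : (#|Z| %| #|sqrt1|)%N.
Proof.
have actsZ : [acts Z, on sqrt1 | 'R%act].
  apply/actsP=> z Zz x /=; have Gz := subsetP (center_sub G) z Zz.
  rewrite /sqrt1 !inE groupMr //; case Gx: (x \in G) => //=.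
  by rewrite expgMn ?(center_exp2 Zz) ?mulg1 //; apply/commute_sym/center_commute.
rewrite (card_uniform_partition (n := #|Z|) _ (orbit_partition actsZ)) ?dvdn_mull //.
by move=> _ /imsetP[x _ ->]; rewrite orbitR card_lcoset.
Qed.

End SmallCentralizers.

Section Arithmetic128.

Local Close Scope ring_scope.

Lemma log_center_mul_deg_le10 c d :
  c %| 128 -> d %| 128 -> d * d * c <= 128 -> c != 8 -> logn 2 c * d <= 10.
Proof.
rewrite !dvdn_divisors //; move: c d.
have : all (fun c => all (fun d =>
    (d * d * c <= 128) ==> (c != 8) ==> (logn 2 c * d <= 10)) (divisors 128))
  (divisors 128) by [].
by move=> /allP all_cd c d /all_cd/allP/[apply]/implyP/[apply]/implyP.
Qed.

Lemma deg_center8_le4 d : d * d * 8 <= 128 -> d <= 4.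
Proof.
move=> le_d; rewrite leqNgt; apply: contraTN le_d => lt4d.
by rewrite -ltnNge (leq_trans _ (leq_mul (leq_mul lt4d lt4d) (leqnn 8))).
Qed.

Lemma deg_center8_gt2 d : d %| 128 -> d * d * 8 <= 128 -> 2 < d -> d = 4.
Proof.
move=> dv_d /deg_center8_le4 le_d4 lt2d.
by case: d dv_d le_d4 lt2d => [|[|[|[|[|d]]]]].
Qed.

Lemma logn_proper_dvd8 c : c %| 8 -> c != 8 -> logn 2 c <= 2.
Proof.
rewrite dvdn_divisors //; move: c.
have : all (fun c => (c != 8) ==> (logn 2 c <= 2)) (divisors 8) by [].
by move=> /allP all_c c /all_c/implyP.
Qed.

End Arithmetic128.

(* Each nontrivial [T i] is 32 or -32, so the sum is 32 modulo 64. *)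
Lemma sum_pm32_indivisible (I : finType) (i0 : I) (T : I -> algC) N :
    #|I| = 8%N -> T i0 = 128%:R -> (forall i, i != i0 -> T i ^+ 2 = 1024%:R) ->
  \sum_i T i = (8 * N)%:R -> ~~ (8 %| N)%N.
Proof.
move=> cardI T0 T2 sumT.
have n32 : (32%:R == - 32%:R :> algC) = false.
  by apply/negbTE; rewrite -subr_eq0 opprK -natrD pnatr_eq0.
have Ti i : i != i0 -> T i = 32%:R - 64%:R *+ (T i == - 32%:R).
  move/T2/eqP; rewrite -[1024%N]/(32 * 32)%N natrM -expr2 eqf_sqr.
  case/orP => /eqP ->; rewrite ?n32 ?eqxx /=; first by rewrite mulr0n subr0.
  by rewrite mulr1n; ring.
move: sumT; rewrite (bigD1 i0) //= T0 (eq_bigr _ Ti) sumrB sumr_const cardC1 cardI.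
rewrite sumrMnr -!mulrnA; set b := (\sum_(i | _) _)%N => sumT.
have /eqP : (1 *+ (8 * N + 64 * b) : algC) = 1 *+ (128 + 32 * 7).
  by rewrite mulrnDr -sumT addrA subrK mulrnDr.
by rewrite eqr_nat => /eqP; lia.
Qed.

Section Order128.

Variables (gT : finGroupType) (G : {group gT}).
Hypothesis oG : #|G| = 128%N.
Local Notation Z := 'Z(G).

Let sZG : Z \subset G := center_sub G.

Lemma pgroup_order128 : 2.-group G.
Proof. by rewrite /pgroup oG. Qed.

Lemma irr_deg_dvd128 (i : Iirr G) : (irr_deg i %| 128)%N.
Proof. by rewrite -oG irr_deg_dvdG. Qed.

Lemma irr_deg_sqr_center128 (i : Iirr G) : (irr_deg i * irr_deg i * #|Z| <= 128)%N.
Proof. by rewrite -oG irr_deg_sqr_center. Qed.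

Lemma irr_seq_Ohm1_center_ne8 : #|Z| != 8%N ->
  exists2 s : seq (Iirr G),
    'Ohm_1(Z) :&: \bigcap_(i <- s) cfker 'chi_i = 1%g & (\sum_(i <- s) irr_deg i <= 10)%N.
Proof.
move=> oZ8; have sOZ : 'Ohm_1(Z) \subset Z := Ohm_sub 1 Z.
have sOG := subset_trans sOZ sZG.
have [s size_s ker_s] := irr_seq_cfker_TI (pgroupS sOG pgroup_order128) sOG.
exists s => //; apply: (leq_sum_seq_size (m := logn 2 #|Z|)).
  exact: leq_trans size_s (dvdn_leq_log _ (cardG_gt0 _) (cardSg sOZ)).
move=> i _; rewrite log_center_mul_deg_le10 ?irr_deg_dvd128 //.
  by rewrite -oG cardSg.
exact: irr_deg_sqr_center128.
Qed.

Section Center8.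

Hypothesis oZ : #|Z| = 8%N.

Let oGZ : #|G : Z| = 16%N.
Proof. by rewrite -divgS // oG oZ. Qed.

Lemma irr_seq_center8_small (K : {group gT}) : K \subset Z -> #|K| != 8%N ->
  exists2 s : seq (Iirr G),
    K :&: \bigcap_(i <- s) cfker 'chi_i = 1%g & (\sum_(i <- s) irr_deg i <= 8)%N.
Proof.
move=> sKZ oK8; have sKG := subset_trans sKZ sZG.
have [s size_s ker_s] := irr_seq_cfker_TI (pgroupS sKG pgroup_order128) sKG.
exists s => //; apply: (leq_sum_seq_size (m := 2)).
  by apply: leq_trans size_s (logn_proper_dvd8 _ oK8); rewrite -oZ cardSg.
move=> i _; rewrite -[8%N]/(2 * 4)%N leq_mul2l /= deg_center8_le4 //.
by have := irr_deg_sqr_center128 i; rewrite oZ.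
Qed.

Section NoSmallFaithfulOnCenter.

Hypothesis irr_deg_gt2 : forall i : Iirr G, ~~ (Z \subset cfker 'chi_i) -> (2 < irr_deg i)%N.

Lemma center8_card_cent1 g : g \in G -> g \notin Z -> #|'C_G[g]| = (#|Z| * 2)%N.
Proof.
move=> Gg notZg.
have vanish (i : Iirr G) : ~~ (Z \subset cfker 'chi_i) -> 'chi_i g = 0.
  move=> notZi; suff [_ /cfun_on0->] : 'Z('chi_i)%CF = Z /\ 'chi_i \in 'CF(G, Z) by [].
  have deg4 : irr_deg i = 4%N.
    apply: deg_center8_gt2 (irr_deg_dvd128 i) _ (irr_deg_gt2 notZi).
    by have := irr_deg_sqr_center128 i; rewrite oZ.
  by apply: irr_sqr_index_center; rewrite irr_degE deg4 oGZ -natrX.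
have le_C16 : (#|'C_G[g]| <= 16)%N.
  rewrite (card_subcent1_quo (center_normal G) Gg vanish) -oGZ -card_quotient.
    by rewrite subset_leq_card ?subsetIl.
  exact: normal_norm (center_normal G).
have sZC : Z \proper 'C_G[g].
  rewrite properE subsetI sZG; apply/andP; split.
    by apply/subsetP=> z /centerP[_ cGz]; apply/cent1P/cGz.
  by apply: contra notZg => /subsetP; apply; apply: subcent1_id.
have /dvdnP[k oC] := cardSg (proper_sub sZC).
have := proper_card sZC; rewrite oC oZ in le_C16 *; lia.
Qed.

Hypothesis center_exp2 : forall z, z \in Z -> (z ^+ 2 = 1)%g.

Lemma center8_contra : False.
Proof.
have card_G : #|G| = (#|Z| * #|Z| * 2)%N by rewrite oG oZ.
have cardIrrZ : #|Iirr Z| = 8%N.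
  by rewrite card_ord NirrE -oZ; apply/eqP; rewrite -card_classes_abelian center_abelian.
have gauss0 : gauss_sum (0 : Iirr Z) = 128%:R.
  by rewrite (gauss_sum0 center8_card_cent1) oG.
have gauss_sqr (j : Iirr Z) : j != 0 -> gauss_sum j ^+ 2 = 1024%:R.
  by move/(gauss_sum_sqr center8_card_cent1 card_G center_exp2); rewrite oG oZ.
have sum_gauss := sum_gauss_sum center8_card_cent1; rewrite oZ in sum_gauss.
have := dvdn_center_card_sqrt1 center_exp2; rewrite oZ.
by apply/negP; apply: sum_pm32_indivisible cardIrrZ gauss0 gauss_sqr sum_gauss.
Qed.

End NoSmallFaithfulOnCenter.

End Center8.

Lemma irr_seq_Ohm1_center :
  exists2 s : seq (Iirr G),
    'Ohm_1(Z) :&: \bigcap_(i <- s) cfker 'chi_i = 1%g & (\sum_(i <- s) irr_deg i <= 10)%N.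
Proof.
have [oZ|oZ8] := eqVneq #|Z| 8%N; last exact: irr_seq_Ohm1_center_ne8.
have sOZ : 'Ohm_1(Z) \subset Z := Ohm_sub 1 Z.
have [oO|oO8] := eqVneq #|'Ohm_1(Z)| 8%N; last first.
  have [s ker_s sum_s] := irr_seq_center8_small oZ sOZ oO8.
  by exists s => //; apply: leq_trans sum_s _.
have eOZ : 'Ohm_1(Z) = Z by apply/eqP; rewrite eqEcard sOZ oO oZ.
have [i0 /andP[notZi0 deg_i0]|no_i0] :=
  pickP (fun i => ~~ (Z \subset cfker 'chi[G]_i) && (irr_deg i <= 2)%N).
  pose K := ('Ohm_1(Z) :&: cfker 'chi[G]_i0)%G.
  have oK8 : #|K| != 8%N.
    apply: contra notZi0 => /eqP oK; rewrite -eOZ.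
    have /eqP <- : K == 'Ohm_1(Z) :> {set gT} by rewrite eqEcard subsetIl oK oO.
    exact: subsetIr.
  have [s ker_s sum_s] := irr_seq_center8_small oZ (subset_trans (subsetIl _ _) sOZ) oK8.
  by exists (i0 :: s); rewrite ?big_cons ?setIA // -[10%N]/(2 + 8)%N leq_add.
case: (center8_contra oZ) => [i notZi|z].
  by move: (no_i0 i); rewrite /= notZi ltnNge /= => ->.
have /(abelemP (isT : prime 2))[_ exp2] :=
  Ohm1_abelem (pgroupS sZG pgroup_order128) (center_abelian G).
by rewrite -eOZ; apply: exp2.
Qed.

End Order128.

Local Close Scope ring_scope.
Local Close Scope group_scope.

Theorem lemma3p4 (gT : finGroupType) (G : {group gT}) :
  #|G| = 128 -> rdim_le G 10.
Proof.
move=> oG; have [s ker_s sum_s] := irr_seq_Ohm1_center oG.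
exists (\sum_(i <- s) irr_deg i) => //.
by apply: faithful_rep_irr_seq ker_s; exact: pgroup_nil (pgroup_order128 oG).
Qed.
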